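(* There is a universal constant $c$ such that for every sufficiently large integer $N$ there is a covering of $\mathbb{S}^2$ by $N$ strips of Euclidean half-width $\frac{10\ln N}{N}$ in which no point of $\mathbb{S}^2$ is covered more than $c\ln N$ times.
   Context: $\mathbb{S}^2=\{x\in\mathbb{R}^3:|x|=1\}$. For $x\in\mathbb{S}^2$ and $0\le w\le 1$, the strip centered at $x$ of Euclidean half-width $w$ is $\{v\in\mathbb{S}^2:|\langle v,x\rangle|\le w\}$. *)

From Stdlib Require Import Reals List.
Open Scope R_scope.

Definition pt3 : Type := (R * R * R)%type.

Definition dot3 (u v : pt3) : R :=
  let '(u1, u2, u3) := u in let '(v1, v2, v3) := v in
  u1 * v1 + u2 * v2 + u3 * v3.

Definition on_sphere (x : pt3) : Prop := dot3 x x = 1.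

Definition in_strip (x : pt3) (w : R) (v : pt3) : Prop :=
  on_sphere v /\ Rabs (dot3 v x) <= w.

Definition cover_count (centers : nat -> pt3) (N : nat) (w : R) (v : pt3) : nat :=
  length (filter (fun i => if Rle_dec (Rabs (dot3 v (centers i))) w then true else false)
                 (seq 0 N)).

From Stdlib Require Import Reals List Lra Lia ZArith.
Open Scope R_scope.

(* Take as centers the normalizations of N points drawn independently and uniformly from
   a cube grid G of 6N^2 points (an N x N grid on each face of [-1, 1]^3). For a direction
   y in G, a fraction about 10 ln N / (3N) of G lies in the strip of half-width
   w - 2/N about y, and a fraction O(ln N / N) in the strip of half-width 2w + 4/N. So the
   probability that no center lands in the first strip is about N^(-10/3), and
   E[3^(#centers in the second strip)] <= exp(O(ln N)) is far below 3^(400 ln N); a union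
   bound over the 6N^2 directions of G yields centers that work for all of them. Every
   unit vector v is within 2/N, as a functional on the sphere, of lam y with y in G and
   1/2 <= lam <= 1, which transfers both properties from G to the whole sphere. *)

(** * Sums and products over lists *)

Fixpoint sumR {A} (f : A -> R) (l : list A) : R :=
  match l with nil => 0 | a :: l' => f a + sumR f l' end.
Fixpoint prodR {A} (f : A -> R) (l : list A) : R :=
  match l with nil => 1 | a :: l' => f a * prodR f l' end.

Lemma sumR_app {A} (f : A -> R) l1 l2 : sumR f (l1 ++ l2) = sumR f l1 + sumR f l2.
Proof. induction l1; simpl; [ring | rewrite IHl1; ring]. Qed.

Lemma sumR_map {A B} (f : B -> R) (g : A -> B) l : sumR f (map g l) = sumR (fun a => f (g a)) l.
Proof. induction l; simpl; [ring | rewrite IHl; ring]. Qed.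

Lemma sumR_flat_map {A B} (f : B -> R) (g : A -> list B) l :
  sumR f (flat_map g l) = sumR (fun a => sumR f (g a)) l.
Proof. induction l; simpl; [ring | rewrite sumR_app, IHl; ring]. Qed.

Lemma sumR_add {A} (f g : A -> R) l : sumR (fun a => f a + g a) l = sumR f l + sumR g l.
Proof. induction l; simpl; [ring | rewrite IHl; ring]. Qed.

Lemma sumR_scale {A} (c : R) (f : A -> R) l : sumR (fun a => c * f a) l = c * sumR f l.
Proof. induction l; simpl; [ring | rewrite IHl; ring]. Qed.

Lemma sumR_div {A} (c : R) (f : A -> R) l : sumR (fun a => f a / c) l = sumR f l / c.
Proof. induction l; simpl; [unfold Rdiv; ring | rewrite IHl; unfold Rdiv; ring]. Qed.

Lemma sumR_ext_in {A} (f g : A -> R) l : (forall a, In a l -> f a = g a) -> sumR f l = sumR g l.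
Proof. induction l; simpl; intros H; [reflexivity | rewrite H, IHl; auto]. Qed.

Lemma sumR_le_in {A} (f g : A -> R) l : (forall a, In a l -> f a <= g a) -> sumR f l <= sumR g l.
Proof.
  induction l as [|a l IH]; simpl; intros H; [lra |].
  pose proof (H a (or_introl eq_refl)); pose proof (IH (fun x Hx => H x (or_intror Hx))); lra.
Qed.

Lemma sumR_const {A} (c : R) (l : list A) : sumR (fun _ => c) l = c * INR (length l).
Proof. induction l; simpl length; [simpl; ring | rewrite S_INR; simpl; rewrite IHl; ring]. Qed.

Lemma sumR_nonneg {A} (f : A -> R) l : (forall a, In a l -> 0 <= f a) -> 0 <= sumR f l.
Proof.
  intros H; apply Rle_trans with (sumR (fun _ => 0) l).
  - rewrite sumR_const; lra.
  - apply sumR_le_in; auto.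
Qed.

Lemma sumR_le_const {A} (f : A -> R) l c : (forall a, In a l -> f a <= c) -> sumR f l <= c * INR (length l).
Proof. intros H; rewrite <- sumR_const; apply sumR_le_in; auto. Qed.

Lemma sumR_ge_const {A} (f : A -> R) l c : (forall a, In a l -> c <= f a) -> c * INR (length l) <= sumR f l.
Proof. intros H; rewrite <- sumR_const; apply sumR_le_in; auto. Qed.

Lemma sumR_swap {A B} (f : A -> B -> R) l1 l2 :
  sumR (fun a => sumR (f a) l2) l1 = sumR (fun b => sumR (fun a => f a b) l1) l2.
Proof.
  induction l1; simpl.
  - rewrite sumR_const; ring.
  - rewrite IHl1, <- sumR_add; reflexivity.
Qed.

Lemma sumR_term_le {A} (f : A -> R) l a :
  In a l -> (forall b, In b l -> 0 <= f b) -> f a <= sumR f l.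
Proof.
  induction l as [|b l IH]; simpl; intros Ha Hnn; [contradiction |].
  assert (Hl : 0 <= sumR f l) by (apply sumR_nonneg; auto).
  destruct Ha as [<- | Ha].
  - lra.
  - specialize (IH Ha (fun c Hc => Hnn c (or_intror Hc))); specialize (Hnn b (or_introl eq_refl)); lra.
Qed.

Lemma sumR_lt_length {A} (f : A -> R) l : sumR f l < INR (length l) -> exists a, In a l /\ f a < 1.
Proof.
  induction l as [|a l IH]; intros H; [simpl in H; lra |].
  cbn [sumR length] in H; rewrite S_INR in H; destruct (Rlt_dec (f a) 1).
  - exists a; simpl; auto.
  - destruct IH as [b [Hb Hf]]; [lra |]. exists b; simpl; auto.
Qed.

Lemma prodR_nonneg {A} (f : A -> R) l : (forall a, In a l -> 0 <= f a) -> 0 <= prodR f l.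
Proof. induction l; simpl; intros H; [lra | apply Rmult_le_pos; auto]. Qed.

Fixpoint tuples {A} (n : nat) (G : list A) : list (list A) :=
  match n with
  | O => nil :: nil
  | S n' => flat_map (fun a => map (cons a) (tuples n' G)) G
  end.

Lemma sumR_prodR_tuples {A} (f : A -> R) n G :
  sumR (prodR f) (tuples n G) = sumR f G ^ n.
Proof.
  induction n; simpl; [ring |].
  rewrite sumR_flat_map, (Rmult_comm (sumR f G)), <- sumR_scale.
  apply sumR_ext_in; intros a _; rewrite sumR_map; simpl.
  rewrite sumR_scale, IHn; ring.
Qed.

Lemma length_tuples {A} n (G : list A) : INR (length (tuples n G)) = INR (length G) ^ n.
Proof.
  rewrite <- (Rmult_1_l (INR (length (tuples n G)))), <- sumR_const.
  rewrite <- (Rmult_1_l (INR (length G))), <- sumR_const, <- sumR_prodR_tuples.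
  apply sumR_ext_in; intros L _; induction L; simpl; [reflexivity | rewrite <- IHL; ring].
Qed.

Lemma In_tuples {A} n (G : list A) L :
  In L (tuples n G) -> length L = n /\ (forall a, In a L -> In a G).
Proof.
  revert L; induction n; simpl; intros L HL.
  - destruct HL as [<- | []]; split; [reflexivity | intros a []].
  - apply in_flat_map in HL as [a [Ha HL]]; apply in_map_iff in HL as [L' [<- HL']].
    destruct (IHn L' HL') as [H1 H2]; simpl; split; [lia |].
    intros b [<- | Hb]; auto.
Qed.

(* First moment method: an [n]-tuple drawn uniformly from [G] makes the expected
   value of the nonnegative quantity below smaller than 1, so some tuple does. *)
Lemma exists_tuple_lt_1 {A B} (G : list A) (Y : list B) (f g : B -> A -> R) (c : R) n :
  (forall y a, 0 <= f y a) -> (forall y a, 0 <= g y a) -> 0 < c ->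
  sumR (fun y => sumR (f y) G ^ n + sumR (g y) G ^ n / c) Y < INR (length G) ^ n ->
  exists L, length L = n /\ (forall a, In a L -> In a G) /\
    forall y, In y Y -> prodR (f y) L + prodR (g y) L / c < 1.
Proof.
  intros Hf Hg Hc Hsum.
  set (bad := fun L => sumR (fun y => prodR (f y) L + prodR (g y) L / c) Y).
  assert (Hmean : sumR bad (tuples n G) < INR (length (tuples n G))).
  { rewrite length_tuples; unfold bad; rewrite sumR_swap.
    erewrite sumR_ext_in; [exact Hsum |]; intros y _.
    rewrite sumR_add, sumR_div, !sumR_prodR_tuples; reflexivity. }
  destruct (sumR_lt_length _ _ Hmean) as [L [HL Hbad]].
  destruct (In_tuples _ _ _ HL) as [Hlen HG].
  exists L; repeat split; auto; intros y Hy.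
  eapply Rle_lt_trans; [apply (sumR_term_le (fun y => prodR (f y) L + prodR (g y) L / c)) | exact Hbad]; auto.
  intros z _; apply Rplus_le_le_0_compat.
  - apply prodR_nonneg; auto.
  - apply Rmult_le_pos; [apply prodR_nonneg; auto | apply Rlt_le, Rinv_0_lt_compat; auto].
Qed.

(** * Grid points in an interval *)

Lemma Rabs_le_inv x b : Rabs x <= b -> - b <= x <= b.
Proof. unfold Rabs; destruct Rcase_abs; lra. Qed.

Lemma in_seq_lt k M : In k (seq 0 M) -> (k < M)%nat.
Proof. intros H; apply in_seq in H; lia. Qed.

Lemma sumR_seq_le (f : nat -> R) M c :
  (forall k, In k (seq 0 M) -> f k <= c) -> sumR f (seq 0 M) <= INR M * c.
Proof.
  intros H; replace (INR M * c) with (c * INR (length (seq 0 M))) by (rewrite length_seq; ring).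
  apply sumR_le_const; auto.
Qed.

Lemma sumR_seq_ge (f : nat -> R) M c :
  (forall k, In k (seq 0 M) -> c <= f k) -> INR M * c <= sumR f (seq 0 M).
Proof.
  intros H; replace (INR M * c) with (c * INR (length (seq 0 M))) by (rewrite length_seq; ring).
  apply sumR_ge_const; auto.
Qed.

Definition ind_itv (lo hi x : R) : R := if Rle_dec lo x then if Rle_dec x hi then 1 else 0 else 0.

Lemma ind_itv_01 lo hi x : 0 <= ind_itv lo hi x <= 1.
Proof. unfold ind_itv; repeat destruct Rle_dec; lra. Qed.

Definition count_itv (M : nat) (lo hi : R) : R := sumR (fun k => ind_itv lo hi (INR k)) (seq 0 M).

Lemma count_itv_S M lo hi : count_itv (S M) lo hi = count_itv M lo hi + ind_itv lo hi (INR M).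
Proof. unfold count_itv; rewrite seq_S, sumR_app; simpl; ring. Qed.

Lemma count_itv_nonneg M lo hi : 0 <= count_itv M lo hi.
Proof. apply sumR_nonneg; intros; apply ind_itv_01. Qed.

Lemma count_itv_cut M lo hi : INR M <= hi ->
  count_itv M lo hi = count_itv M lo (INR M - 1).
Proof.
  intros Hhi; apply sumR_ext_in; intros k Hk.
  apply in_seq_lt, le_INR in Hk; rewrite S_INR in Hk.
  unfold ind_itv; repeat destruct Rle_dec; lra.
Qed.

Lemma count_itv_le M : forall lo hi, count_itv M lo hi <= Rmax 0 (hi - lo + 1).
Proof.
  induction M as [|M IH]; intros lo hi; [apply Rmax_l |].
  rewrite count_itv_S.
  destruct (Rle_dec lo (INR M)); [destruct (Rle_dec (INR M) hi) |];
    try (specialize (IH lo hi); unfold ind_itv; repeat destruct Rle_dec; lra).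
  rewrite count_itv_cut by lra; specialize (IH lo (INR M - 1)).
  unfold ind_itv; repeat destruct Rle_dec; try lra.
  rewrite Rmax_right in IH |- * by lra; lra.
Qed.

Lemma count_itv_ge M : forall lo hi, -1 <= lo -> hi <= INR M -> hi - lo - 1 <= count_itv M lo hi.
Proof.
  induction M as [|M IH]; intros lo hi Hlo Hhi.
  - simpl in Hhi; unfold count_itv; simpl; lra.
  - rewrite count_itv_S; rewrite S_INR in Hhi.
    pose proof (ind_itv_01 lo hi (INR M)).
    destruct (Rle_dec hi (INR M)); [specialize (IH lo hi Hlo r); lra |].
    destruct (Rle_dec lo (INR M)); [| pose proof (count_itv_nonneg M lo hi); lra].
    rewrite count_itv_cut, <- (count_itv_cut M lo (INR M)) by lra.
    specialize (IH lo (INR M) Hlo (Rle_refl _)).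
    unfold ind_itv; repeat destruct Rle_dec; lra.
Qed.

(* [grid M k], [k < M], are the midpoints of the [M] equal subintervals of [-1, 1]. *)
Definition grid (M k : nat) : R := (2 * INR k + 1 - INR M) / INR M.

Lemma grid_bound M k : (k < M)%nat -> -1 <= grid M k <= 1.
Proof.
  intros H; assert (HM : 0 < INR M) by (apply lt_0_INR; lia).
  apply le_INR in H; rewrite S_INR in H; pose proof (pos_INR k).
  assert (E : grid M k * INR M = 2 * INR k + 1 - INR M) by (unfold grid; field; lra).
  split; nra.
Qed.

Lemma ind_itv_grid M lo hi k : (0 < M)%nat ->
  ind_itv lo hi (grid M k) = ind_itv ((INR M * lo + INR M - 1) / 2) ((INR M * hi + INR M - 1) / 2) (INR k).
Proof.
  intros H; assert (HM : 0 < INR M) by (apply lt_0_INR; lia).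
  assert (E : grid M k * INR M = 2 * INR k + 1 - INR M) by (unfold grid; field; lra).
  unfold ind_itv; repeat destruct Rle_dec; try reflexivity; exfalso; nra.
Qed.

Definition count_grid (M : nat) (lo hi : R) : R := sumR (fun k => ind_itv lo hi (grid M k)) (seq 0 M).

Lemma count_grid_eq M lo hi : (0 < M)%nat ->
  count_grid M lo hi = count_itv M ((INR M * lo + INR M - 1) / 2) ((INR M * hi + INR M - 1) / 2).
Proof. intros H; apply sumR_ext_in; intros; apply ind_itv_grid; auto. Qed.

Lemma count_grid_le M lo hi : (0 < M)%nat -> lo <= hi ->
  count_grid M lo hi <= (hi - lo) * INR M / 2 + 1.
Proof.
  intros H Hle; assert (HM : 0 < INR M) by (apply lt_0_INR; lia).
  rewrite count_grid_eq by auto; eapply Rle_trans; [apply count_itv_le |].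
  apply Rmax_lub; nra.
Qed.

Lemma count_grid_ge M lo hi : (0 < M)%nat -> -1 <= lo -> hi <= 1 ->
  (hi - lo) * INR M / 2 - 1 <= count_grid M lo hi.
Proof.
  intros H Hlo Hhi; assert (HM : 0 < INR M) by (apply lt_0_INR; lia).
  rewrite count_grid_eq by auto; eapply Rle_trans; [| apply count_itv_ge]; nra.
Qed.

Definition abs_leb (x h : R) : bool := if Rle_dec (Rabs x) h then true else false.
Definition ind_abs (x h : R) : R := if abs_leb x h then 1 else 0.

Lemma ind_abs_01 x h : 0 <= ind_abs x h <= 1.
Proof. unfold ind_abs, abs_leb; destruct Rle_dec; lra. Qed.

Lemma ind_abs_affine_le a c H x : 0 < a ->
  ind_abs (a * x + c) H <= ind_itv ((- H - c) / a) ((H - c) / a) x.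
Proof.
  intros Ha; unfold ind_abs, abs_leb, ind_itv.
  assert (E1 : (- H - c) / a * a = - H - c) by (field; lra).
  assert (E2 : (H - c) / a * a = H - c) by (field; lra).
  destruct Rle_dec as [Hx |]; [apply Rabs_le_inv in Hx | repeat destruct Rle_dec; lra].
  repeat destruct Rle_dec; try lra; exfalso; nra.
Qed.

Lemma count_affine_le_pos M a c H : (0 < M)%nat -> 0 <= H -> 1/4 <= a ->
  sumR (fun k => ind_abs (a * grid M k + c) H) (seq 0 M) <= 4 * H * INR M + 1.
Proof.
  intros HM0 HH Ha; assert (HM : 0 < INR M) by (apply lt_0_INR; lia).
  eapply Rle_trans.
  - apply sumR_le_in; intros k _; apply (ind_abs_affine_le a c H); lra.
  - fold (count_grid M ((- H - c) / a) ((H - c) / a)).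
    assert (E : (H - c) / a - (- H - c) / a = 2 * H / a) by (field; lra).
    assert (Hinv : 2 * H / a <= 8 * H).
    { apply Rmult_le_reg_r with a; [lra |]. replace (2 * H / a * a) with (2 * H) by (field; lra). nra. }
    assert (Hnn : 0 <= 2 * H / a) by (apply Rmult_le_pos; [lra | apply Rlt_le, Rinv_0_lt_compat; lra]).
    eapply Rle_trans; [apply count_grid_le; auto; lra |]. rewrite E; nra.
Qed.

Lemma count_affine_le M a c H : (0 < M)%nat -> 0 <= H -> 1/4 <= Rabs a ->
  sumR (fun k => ind_abs (a * grid M k + c) H) (seq 0 M) <= 4 * H * INR M + 1.
Proof.
  intros HM HH Ha; destruct (Rle_lt_dec 0 a).
  - rewrite Rabs_right in Ha by lra; apply count_affine_le_pos; auto.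
  - rewrite Rabs_left in Ha by lra.
    rewrite (sumR_ext_in _ (fun k => ind_abs (- a * grid M k + - c) H)).
    + apply count_affine_le_pos; auto.
    + intros k _; unfold ind_abs, abs_leb.
      replace (- a * grid M k + - c) with (- (a * grid M k + c)) by ring; rewrite Rabs_Ropp; reflexivity.
Qed.

Definition count_near (M : nat) (t h : R) : R := sumR (fun k => ind_abs (grid M k - t) h) (seq 0 M).

Lemma count_near_nonneg M t h : 0 <= count_near M t h.
Proof. apply sumR_nonneg; intros; apply ind_abs_01. Qed.

(* the length of [t - h, t + h] inside [-1, 1], negative when they are disjoint *)
Definition near_length (t h : R) : R := Rmin 1 (t + h) - Rmax (-1) (t - h).

Lemma count_near_ge M t h : (0 < M)%nat -> near_length t h * INR M / 2 - 1 <= count_near M t h.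
Proof.
  intros HM; eapply Rle_trans; [apply count_grid_ge; auto; [apply Rmax_l | apply Rmin_l] |].
  apply sumR_le_in; intros k _; unfold ind_abs, abs_leb, ind_itv.
  pose proof (Rmax_r (-1) (t - h)); pose proof (Rmin_r 1 (t + h)).
  repeat destruct Rle_dec; try lra; exfalso; match goal with H : ~ Rabs _ <= _ |- _ => apply H end;
  apply Rabs_le; lra.
Qed.

Lemma near_length_pair t1 t2 h : 0 < h <= 1 -> Rabs t1 + Rabs t2 <= 2 ->
  2 * h <= near_length t1 h + near_length t2 h \/ 2 * h <= near_length t1 h \/ 2 * h <= near_length t2 h.
Proof.
  unfold near_length, Rmin, Rmax, Rabs; intros; repeat destruct Rle_dec; repeat destruct Rcase_abs; lra.
Qed.

Lemma count_near_pair M t1 t2 h : (0 < M)%nat -> 0 < h <= 1 -> Rabs t1 + Rabs t2 <= 2 ->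
  h * INR M - 2 <= count_near M t1 h + count_near M t2 h.
Proof.
  intros HM Hh Ht; assert (HMp : 0 < INR M) by (apply lt_0_INR; lia).
  pose proof (count_near_ge M t1 h HM); pose proof (count_near_ge M t2 h HM).
  pose proof (count_near_nonneg M t1 h); pose proof (count_near_nonneg M t2 h).
  destruct (near_length_pair t1 t2 h Hh Ht) as [Hl | [Hl | Hl]]; nra.
Qed.

Lemma count_affine_pair_ge M sg al b h : (0 < M)%nat -> 0 < h <= 1 -> (sg = 1 \/ sg = -1) ->
  Rabs al <= 1 -> Rabs b <= 1 ->
  h * INR M - 2 <= sumR (fun k => ind_abs (sg * grid M k + (al + b)) h) (seq 0 M)
                 + sumR (fun k => ind_abs (sg * grid M k + (- al + b)) h) (seq 0 M).
Proof.
  intros HM Hh Hs Ha Hb.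
  assert (E : forall c, sumR (fun k => ind_abs (sg * grid M k + c) h) (seq 0 M) = count_near M (- sg * c) h).
  { intros c; apply sumR_ext_in; intros k _; unfold ind_abs, abs_leb.
    replace (Rabs (sg * grid M k + c)) with (Rabs (grid M k - - sg * c)); [reflexivity |].
    destruct Hs; subst sg; [f_equal; ring | rewrite <- Rabs_Ropp; f_equal; ring]. }
  rewrite !E; apply count_near_pair; auto.
  revert Ha Hb; destruct Hs; subst sg; unfold Rabs; repeat destruct Rcase_abs; lra.
Qed.

(** * The cube grid *)

Definition cube_pt (i : nat) (s a b : R) : pt3 :=
  match i with 0%nat => (s, a, b) | 1%nat => (a, s, b) | _ => (a, b, s) end.

Definition faces : list (nat * R) :=
  (0%nat, 1) :: (0%nat, -1) :: (1%nat, 1) :: (1%nat, -1) :: (2%nat, 1) :: (2%nat, -1) :: nil.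

(* [6 M^2] points on the surface of the cube [[-1, 1]^3], an [M x M] grid on each face *)
Definition cube_grid (M : nat) : list pt3 :=
  flat_map (fun fs => flat_map (fun k1 => map (fun k2 => cube_pt (fst fs) (snd fs) (grid M k1) (grid M k2))
    (seq 0 M)) (seq 0 M)) faces.

Definition grid_sum2 (M : nat) (e : R -> R -> R) : R :=
  sumR (fun k1 => sumR (fun k2 => e (grid M k1) (grid M k2)) (seq 0 M)) (seq 0 M).

Definition on_cube (y : pt3) : Prop :=
  exists j sg p q, (j = 0 \/ j = 1 \/ j = 2)%nat /\ (sg = 1 \/ sg = -1) /\
    Rabs p <= 1 /\ Rabs q <= 1 /\ y = cube_pt j sg p q.

Lemma sumR_cube_grid M (f : pt3 -> R) : sumR f (cube_grid M) =
  sumR (fun fs => grid_sum2 M (fun g1 g2 => f (cube_pt (fst fs) (snd fs) g1 g2))) faces.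
Proof.
  unfold cube_grid; rewrite sumR_flat_map; apply sumR_ext_in; intros fs _.
  rewrite sumR_flat_map; apply sumR_ext_in; intros k1 _; apply sumR_map.
Qed.

Lemma length_cube_grid M : INR (length (cube_grid M)) = 6 * INR M * INR M.
Proof.
  rewrite <- (Rmult_1_l (INR (length (cube_grid M)))), <- sumR_const, sumR_cube_grid.
  unfold grid_sum2; simpl; rewrite !sumR_const, length_seq; ring.
Qed.

Lemma grid_sum2_swap M e : grid_sum2 M e = grid_sum2 M (fun g1 g2 => e g2 g1).
Proof. apply sumR_swap. Qed.

Lemma grid_sum2_nonneg M e h : 0 <= grid_sum2 M (fun g1 g2 => ind_abs (e g1 g2) h).
Proof. apply sumR_nonneg; intros; apply sumR_nonneg; intros; apply ind_abs_01. Qed.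

Lemma In_cube_grid M j sg k1 k2 : (j = 0 \/ j = 1 \/ j = 2)%nat -> (sg = 1 \/ sg = -1) ->
  (k1 < M)%nat -> (k2 < M)%nat -> In (cube_pt j sg (grid M k1) (grid M k2)) (cube_grid M).
Proof.
  intros Hj Hs H1 H2; unfold cube_grid; apply in_flat_map; exists (j, sg); split.
  - simpl; destruct Hj as [-> | [-> | ->]]; destruct Hs as [-> | ->]; tauto.
  - apply in_flat_map; exists k1; split; [apply in_seq; lia |].
    apply in_map_iff; exists k2; split; [reflexivity | apply in_seq; lia].
Qed.

Lemma cube_grid_on_cube M y : In y (cube_grid M) -> on_cube y.
Proof.
  unfold cube_grid; intros H; apply in_flat_map in H as [[i s] [Hf H]].
  apply in_flat_map in H as [k1 [Hk1 H]]; apply in_map_iff in H as [k2 [<- Hk2]].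
  apply in_seq_lt, grid_bound in Hk1; apply in_seq_lt, grid_bound in Hk2.
  exists i, s, (grid M k1), (grid M k2).
  assert (Rabs (grid M k1) <= 1 /\ Rabs (grid M k2) <= 1) by (split; apply Rabs_le; lra).
  simpl in Hf; destruct Hf as [E | [E | [E | [E | [E | [E | []]]]]]]; injection E; intros; subst;
    repeat split; tauto.
Qed.

Lemma grid_sum2_slab_le M H e : (0 < M)%nat -> 0 <= H ->
  (exists a, 1/4 <= Rabs a /\ forall g1 g2, e g1 g2 = a * g1 + e 0 g2) \/
  (exists a, 1/4 <= Rabs a /\ forall g1 g2, e g1 g2 = a * g2 + e g1 0) \/
  (forall g1 g2, -1 <= g1 <= 1 -> -1 <= g2 <= 1 -> H < Rabs (e g1 g2)) ->
  grid_sum2 M (fun g1 g2 => ind_abs (e g1 g2) H) <= INR M * (4 * H * INR M + 1).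
Proof.
  intros HM HH [[a [Ha He]] | [[a [Ha He]] | He]]; assert (HMp : 0 < INR M) by (apply lt_0_INR; lia).
  - rewrite grid_sum2_swap; unfold grid_sum2.
    apply sumR_seq_le; intros k1 _.
    rewrite (sumR_ext_in _ (fun k2 => ind_abs (a * grid M k2 + e 0 (grid M k1)) H))
      by (intros; rewrite He; reflexivity).
    apply count_affine_le; auto.
  - unfold grid_sum2; apply sumR_seq_le; intros k1 _.
    rewrite (sumR_ext_in _ (fun k2 => ind_abs (a * grid M k2 + e (grid M k1) 0) H))
      by (intros; rewrite He; reflexivity).
    apply count_affine_le; auto.
  - apply Rle_trans with 0; [| nra].
    unfold grid_sum2; rewrite <- (Rmult_0_r (INR M)); apply sumR_seq_le; intros k1 Hk1.
    rewrite <- (Rmult_0_r (INR M)); apply sumR_seq_le; intros k2 Hk2.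
    apply in_seq_lt, grid_bound in Hk1; apply in_seq_lt, grid_bound in Hk2.
    specialize (He _ _ Hk1 Hk2); unfold ind_abs, abs_leb; destruct Rle_dec; lra.
Qed.

(* On a face parallel to the one containing [y], either [<y, .>] varies fast along
   a grid direction, or it stays far from [0]. *)
Lemma parallel_face_cases sg s p q H e : 0 <= H < 1/2 -> (sg = 1 \/ sg = -1) -> (s = 1 \/ s = -1) ->
  Rabs p <= 1 -> Rabs q <= 1 -> (forall g1 g2, e g1 g2 = sg * s + p * g1 + q * g2) ->
  (exists a, 1/4 <= Rabs a /\ forall g1 g2, e g1 g2 = a * g1 + e 0 g2) \/
  (exists a, 1/4 <= Rabs a /\ forall g1 g2, e g1 g2 = a * g2 + e g1 0) \/
  (forall g1 g2, -1 <= g1 <= 1 -> -1 <= g2 <= 1 -> H < Rabs (e g1 g2)).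
Proof.
  intros HH Hsg Hs Hp Hq He.
  destruct (Rle_dec (1/4) (Rabs p)); [left; exists p; split; [lra | intros; rewrite !He; ring] |].
  destruct (Rle_dec (1/4) (Rabs q)); [right; left; exists q; split; [lra | intros; rewrite !He; ring] |].
  right; right; intros g1 g2 H1 H2; rewrite He.
  assert (Rabs (p * g1) <= 1/4 /\ Rabs (q * g2) <= 1/4) as [Hpg Hqg].
  { rewrite !Rabs_mult; assert (Rabs g1 <= 1 /\ Rabs g2 <= 1) by (split; apply Rabs_le; lra).
    pose proof (Rabs_pos g1); pose proof (Rabs_pos g2); pose proof (Rabs_pos p); pose proof (Rabs_pos q).
    split; nra. }
  revert Hpg Hqg; destruct Hsg, Hs; subst; unfold Rabs; repeat destruct Rcase_abs; lra.
Qed.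

Lemma Rabs_sign s : (s = 1 \/ s = -1) -> Rabs s = 1.
Proof. intros [-> | ->]; unfold Rabs; destruct Rcase_abs; lra. Qed.

Lemma count_cube_slab_le M H y : (0 < M)%nat -> 0 <= H < 1/2 -> on_cube y ->
  sumR (fun u => ind_abs (dot3 y u) H) (cube_grid M) <= 6 * (INR M * (4 * H * INR M + 1)).
Proof.
  intros HM HH [j [sg [p [q [Hj [Hs [Hp [Hq ->]]]]]]]].
  rewrite sumR_cube_grid; replace 6 with (INR (length faces)) by (simpl; ring).
  rewrite Rmult_comm; apply sumR_le_const; intros [i s] Hf; apply grid_sum2_slab_le; [exact HM | lra |].
  simpl in Hf; destruct Hf as [E | [E | [E | [E | [E | [E | []]]]]]]; injection E; intros <- <-;
    destruct Hj as [-> | [-> | ->]];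
    first [ left; exists sg; split; [rewrite Rabs_sign; [lra | auto] | intros; simpl; ring]
          | right; left; exists sg; split; [rewrite Rabs_sign; [lra | auto] | intros; simpl; ring]
          | apply (parallel_face_cases sg 1 p q);
              [exact HH | exact Hs | left; reflexivity | exact Hp | exact Hq | intros; simpl; ring]
          | apply (parallel_face_cases sg (-1) p q);
              [exact HH | exact Hs | right; reflexivity | exact Hp | exact Hq | intros; simpl; ring] ].
Qed.

Lemma grid_sum2_pair_ge M h sg (e1 e2 : R -> R -> R) : (0 < M)%nat -> 0 < h <= 1 -> (sg = 1 \/ sg = -1) ->
  (forall g1 g2, e1 g1 g2 = sg * g2 + e1 g1 0) -> (forall g1 g2, e2 g1 g2 = sg * g2 + e2 g1 0) ->
  (forall g, -1 <= g <= 1 -> exists al b,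
     Rabs al <= 1 /\ Rabs b <= 1 /\ e1 g 0 = al + b /\ e2 g 0 = - al + b) ->
  INR M * (h * INR M - 2) <=
    grid_sum2 M (fun g1 g2 => ind_abs (e1 g1 g2) h) + grid_sum2 M (fun g1 g2 => ind_abs (e2 g1 g2) h).
Proof.
  intros HM Hh Hs H1 H2 Hab; unfold grid_sum2; rewrite <- sumR_add.
  apply sumR_seq_ge; intros k1 Hk1.
  apply in_seq_lt, grid_bound in Hk1; destruct (Hab _ Hk1) as [al [b [Ha [Hb [E1 E2]]]]].
  rewrite (sumR_ext_in _ (fun k2 => ind_abs (sg * grid M k2 + (al + b)) h)) by (intros; rewrite H1, E1; auto).
  rewrite (sumR_ext_in (fun k2 => ind_abs (e2 _ _) h) (fun k2 => ind_abs (sg * grid M k2 + (- al + b)) h))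
    by (intros; rewrite H2, E2; auto).
  apply count_affine_pair_ge; auto.
Qed.

Lemma grid_sum2_pair_ge_swap M h sg (e1 e2 : R -> R -> R) :
  (0 < M)%nat -> 0 < h <= 1 -> (sg = 1 \/ sg = -1) ->
  (forall g1 g2, e1 g1 g2 = sg * g1 + e1 0 g2) -> (forall g1 g2, e2 g1 g2 = sg * g1 + e2 0 g2) ->
  (forall g, -1 <= g <= 1 -> exists al b,
     Rabs al <= 1 /\ Rabs b <= 1 /\ e1 0 g = al + b /\ e2 0 g = - al + b) ->
  INR M * (h * INR M - 2) <=
    grid_sum2 M (fun g1 g2 => ind_abs (e1 g1 g2) h) + grid_sum2 M (fun g1 g2 => ind_abs (e2 g1 g2) h).
Proof.
  intros; rewrite (grid_sum2_swap M (fun g1 g2 => ind_abs (e1 g1 g2) h)),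
    (grid_sum2_swap M (fun g1 g2 => ind_abs (e2 g1 g2) h)).
  apply (grid_sum2_pair_ge M h sg (fun g1 g2 => e1 g2 g1) (fun g1 g2 => e2 g2 g1)); auto.
Qed.

Lemma Rabs_mult_le_1 a b : Rabs a <= 1 -> Rabs b <= 1 -> Rabs (a * b) <= 1.
Proof. intros; rewrite Rabs_mult; pose proof (Rabs_pos a); pose proof (Rabs_pos b); nra. Qed.

(* On the two faces orthogonal to an axis other than that of [y], the values of
   [<y, .>] at opposite points are [sg g + al + b] and [sg g - al + b]. *)
Ltac pair_witness p q :=
  let g := fresh "g" in let Hg := fresh "Hg" in
  intros g Hg;
  first [ exists p, (q * g); split;
            [assumption | split; [apply Rabs_mult_le_1; [assumption | apply Rabs_le; lra] | split; simpl; ring]]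
        | exists q, (p * g); split;
            [assumption | split; [apply Rabs_mult_le_1; [assumption | apply Rabs_le; lra] | split; simpl; ring]] ].

Ltac opposite_faces_ge sg p q :=
  first [ apply (grid_sum2_pair_ge_swap _ _ sg); [assumption | lra | assumption | intros; simpl; ring
                                                | intros; simpl; ring | pair_witness p q]
        | apply (grid_sum2_pair_ge _ _ sg); [assumption | lra | assumption | intros; simpl; ring
                                           | intros; simpl; ring | pair_witness p q] ].

Lemma count_cube_slab_ge M h y : (0 < M)%nat -> 0 < h <= 1 -> on_cube y ->
  2 * (INR M * (h * INR M - 2)) <= sumR (fun u => ind_abs (dot3 y u) h) (cube_grid M).
Proof.
  intros HM Hh [j [sg [p [q [Hj [Hs [Hp [Hq ->]]]]]]]].
  rewrite sumR_cube_grid; unfold faces; cbn [sumR fst snd].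
  set (D := fun i s => grid_sum2 M (fun g1 g2 => ind_abs (dot3 (cube_pt j sg p q) (cube_pt i s g1 g2)) h)).
  change (2 * (INR M * (h * INR M - 2)) <= D 0%nat 1 + (D 0%nat (-1) + (D 1%nat 1 + (D 1%nat (-1)
    + (D 2%nat 1 + (D 2%nat (-1) + 0)))))).
  assert (Hnn : forall i s, 0 <= D i s) by (intros; apply grid_sum2_nonneg).
  pose proof (Hnn 0%nat 1); pose proof (Hnn 0%nat (-1)); pose proof (Hnn 1%nat 1);
  pose proof (Hnn 1%nat (-1)); pose proof (Hnn 2%nat 1); pose proof (Hnn 2%nat (-1)).
  assert (P0 : j <> 0%nat -> INR M * (h * INR M - 2) <= D 0%nat 1 + D 0%nat (-1))
    by (intros; destruct Hj as [-> | [-> | ->]]; [lia | |]; unfold D; opposite_faces_ge sg p q).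
  assert (P1 : j <> 1%nat -> INR M * (h * INR M - 2) <= D 1%nat 1 + D 1%nat (-1))
    by (intros; destruct Hj as [-> | [-> | ->]]; [| lia |]; unfold D; opposite_faces_ge sg p q).
  assert (P2 : j <> 2%nat -> INR M * (h * INR M - 2) <= D 2%nat 1 + D 2%nat (-1))
    by (intros; destruct Hj as [-> | [-> | ->]]; [| | lia]; unfold D; opposite_faces_ge sg p q).
  destruct Hj as [-> | [-> | ->]].
  - specialize (P1 ltac:(lia)); specialize (P2 ltac:(lia)); lra.
  - specialize (P0 ltac:(lia)); specialize (P2 ltac:(lia)); lra.
  - specialize (P0 ltac:(lia)); specialize (P1 ltac:(lia)); lra.
Qed.

(** * Radial projection and the net property *)

Definition norm3 (u : pt3) : R := sqrt (dot3 u u).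
Definition normalize (u : pt3) : pt3 := let '(a, b, c) := u in (a / norm3 u, b / norm3 u, c / norm3 u).

Lemma dot3_normalize y u : 0 < dot3 u u -> dot3 y (normalize u) = dot3 y u / norm3 u.
Proof.
  intros H; assert (0 < norm3 u) by (apply sqrt_lt_R0; auto).
  destruct u as [[a b] c]; destruct y as [[y1 y2] y3]; simpl; field; lra.
Qed.

Lemma normalize_on_sphere u : 0 < dot3 u u -> on_sphere (normalize u).
Proof.
  intros H; assert (Hn : 0 < norm3 u) by (apply sqrt_lt_R0; auto).
  assert (E : norm3 u * norm3 u = dot3 u u) by (apply sqrt_sqrt; lra).
  destruct u as [[a b] c]; unfold on_sphere, normalize; simpl in E |- *.
  set (n := norm3 (a, b, c)) in *.
  replace (a / n * (a / n) + b / n * (b / n) + c / n * (c / n)) with ((a * a + b * b + c * c) / (n * n))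
    by (field; lra).
  rewrite <- E; field; lra.
Qed.

Lemma on_cube_dot_self u : on_cube u -> 1 <= dot3 u u <= 3.
Proof.
  intros [j [sg [p [q [Hj [Hs [Hp [Hq ->]]]]]]]].
  apply Rabs_le_inv in Hp; apply Rabs_le_inv in Hq.
  destruct Hj as [-> | [-> | ->]]; destruct Hs as [-> | ->]; simpl; split; nra.
Qed.

Lemma on_cube_norm3 u : on_cube u -> 1 <= norm3 u <= 2.
Proof.
  intros H; apply on_cube_dot_self in H; unfold norm3; split.
  - rewrite <- sqrt_1; apply sqrt_le_1_alt; lra.
  - rewrite <- (sqrt_square 2) by lra; apply sqrt_le_1_alt; lra.
Qed.

Lemma ind_abs_div_ge x r h : 1 <= r -> ind_abs x h <= ind_abs (x / r) h.
Proof.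
  intros Hr; assert (E : Rabs (x / r) * r = Rabs x).
  { unfold Rdiv; rewrite Rabs_mult, Rabs_inv, (Rabs_right r) by lra; field; lra. }
  pose proof (Rabs_pos (x / r)); unfold ind_abs, abs_leb; repeat destruct Rle_dec; nra.
Qed.

Lemma ind_abs_div_le x r H : 0 < r <= 2 -> ind_abs (x / r) H <= ind_abs x (2 * H).
Proof.
  intros Hr; assert (E : Rabs (x / r) * r = Rabs x).
  { unfold Rdiv; rewrite Rabs_mult, Rabs_inv, (Rabs_right r) by lra; field; lra. }
  pose proof (Rabs_pos (x / r)); unfold ind_abs, abs_leb; repeat destruct Rle_dec; nra.
Qed.

Lemma near_nat M r : (0 < M)%nat -> 0 <= r <= INR M -> exists k, (k < M)%nat /\ INR k <= r <= INR k + 1.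
Proof.
  induction M as [| [| M] IH]; intros HM Hr; [lia | exists 0%nat; simpl in *; split; [lia | lra] |].
  destruct (Rle_dec r (INR (S M))).
  - destruct (IH ltac:(lia) ltac:(lra)) as [k [Hk Hk']]; exists k; split; [lia | lra].
  - exists (S M); split; [lia |]; rewrite (S_INR (S M)) in Hr; lra.
Qed.

Lemma grid_near M z : (0 < M)%nat -> -1 <= z <= 1 ->
  exists k, (k < M)%nat /\ Rabs (grid M k - z) <= 1 / INR M.
Proof.
  intros HM Hz; assert (HMp : 0 < INR M) by (apply lt_0_INR; lia).
  destruct (near_nat M (INR M * (z + 1) / 2) HM) as [k [Hk Hr]]; [split; nra |].
  exists k; split; auto.
  assert (E : (grid M k - z) * INR M = 2 * INR k + 1 - INR M * (z + 1)) by (unfold grid; field; lra).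
  assert (E' : 1 / INR M * INR M = 1) by (field; lra).
  apply Rabs_le; split; nra.
Qed.

Lemma dominant_coord_near_grid M vj a b : (0 < M)%nat -> vj * vj + a * a + b * b = 1 ->
  Rabs a <= Rabs vj -> Rabs b <= Rabs vj ->
  exists sg k1 k2 lam, (sg = 1 \/ sg = -1) /\ (k1 < M)%nat /\ (k2 < M)%nat /\ 1/2 <= lam <= 1 /\
    vj = lam * sg /\ Rabs (a - lam * grid M k1) <= 1 / INR M /\ Rabs (b - lam * grid M k2) <= 1 / INR M.
Proof.
  intros HM Hn Ha Hb; assert (HMp : 0 < INR M) by (apply lt_0_INR; lia).
  set (lam := Rabs vj).
  assert (Hl : 1/2 <= lam <= 1).
  { unfold lam; revert Ha Hb; unfold Rabs; repeat destruct Rcase_abs; intros; split; nra. }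
  assert (Hscale : forall c, Rabs c <= lam -> -1 <= c / lam <= 1 /\
                   forall g, Rabs (g - c / lam) <= 1 / INR M -> Rabs (c - lam * g) <= 1 / INR M).
  { intros c Hc; apply Rabs_le_inv in Hc.
    assert (E : c / lam * lam = c) by (field; lra).
    split; [split; nra |]; intros g Hg.
    replace (c - lam * g) with (- lam * (g - c / lam)) by (field; lra).
    rewrite Rabs_mult, Rabs_Ropp, (Rabs_right lam) by lra.
    pose proof (Rabs_pos (g - c / lam)).
    assert (0 <= 1 / INR M) by (apply Rlt_le, Rdiv_lt_0_compat; lra); nra. }
  destruct (Hscale a Ha) as [Ha1 Ha2]; destruct (Hscale b Hb) as [Hb1 Hb2].
  destruct (grid_near M _ HM Ha1) as [k1 [Hk1 E1]]; destruct (grid_near M _ HM Hb1) as [k2 [Hk2 E2]].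
  exists (if Rle_dec 0 vj then 1 else -1), k1, k2, lam.
  split; [destruct Rle_dec; auto |]; do 3 (split; [assumption |]).
  split; [unfold lam, Rabs; destruct Rcase_abs, Rle_dec; lra | auto].
Qed.

Lemma sphere_coord_bound x1 x2 x3 : on_sphere (x1, x2, x3) -> Rabs x1 <= 1 /\ Rabs x2 <= 1 /\ Rabs x3 <= 1.
Proof. unfold on_sphere; simpl; intros H; repeat split; apply Rabs_le; split; nra. Qed.

Lemma Rabs_comb2_le A B xa xb e : Rabs A <= e -> Rabs B <= e -> Rabs xa <= 1 -> Rabs xb <= 1 ->
  Rabs (A * xa + B * xb) <= 2 * e.
Proof.
  intros; eapply Rle_trans; [apply Rabs_triang |]; rewrite !Rabs_mult.
  pose proof (Rabs_pos A); pose proof (Rabs_pos B); pose proof (Rabs_pos xa); pose proof (Rabs_pos xb); nra.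
Qed.

Lemma cube_grid_net M v : (0 < M)%nat -> on_sphere v ->
  exists y, In y (cube_grid M) /\ exists lam, 1/2 <= lam <= 1 /\
    forall x, on_sphere x -> Rabs (dot3 v x - lam * dot3 y x) <= 2 / INR M.
Proof.
  intros HM Hv; destruct v as [[v1 v2] v3]; unfold on_sphere in Hv; simpl in Hv.
  replace (2 / INR M) with (2 * (1 / INR M)) by (unfold Rdiv; ring).
  destruct (Rle_dec (Rabs v2) (Rabs v1)); destruct (Rle_dec (Rabs v3) (Rabs v1));
    destruct (Rle_dec (Rabs v3) (Rabs v2)).
  all: first
   [ destruct (dominant_coord_near_grid M v1 v2 v3 HM ltac:(lra) ltac:(lra) ltac:(lra))
       as [sg [k1 [k2 [lam [Hs [Hk1 [Hk2 [Hl [E [A1 A2]]]]]]]]]];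
     exists (cube_pt 0 sg (grid M k1) (grid M k2)); split; [apply In_cube_grid; auto |];
     exists lam; split; auto; intros [[x1 x2] x3] Hx; apply sphere_coord_bound in Hx as [X1 [X2 X3]];
     simpl; rewrite E;
     replace (lam * sg * x1 + v2 * x2 + v3 * x3 - lam * (sg * x1 + grid M k1 * x2 + grid M k2 * x3))
       with ((v2 - lam * grid M k1) * x2 + (v3 - lam * grid M k2) * x3) by ring;
     apply Rabs_comb2_le; auto
   | destruct (dominant_coord_near_grid M v2 v1 v3 HM ltac:(lra) ltac:(lra) ltac:(lra))
       as [sg [k1 [k2 [lam [Hs [Hk1 [Hk2 [Hl [E [A1 A2]]]]]]]]]];
     exists (cube_pt 1 sg (grid M k1) (grid M k2)); split; [apply In_cube_grid; auto |];
     exists lam; split; auto; intros [[x1 x2] x3] Hx; apply sphere_coord_bound in Hx as [X1 [X2 X3]];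
     simpl; rewrite E;
     replace (v1 * x1 + lam * sg * x2 + v3 * x3 - lam * (grid M k1 * x1 + sg * x2 + grid M k2 * x3))
       with ((v1 - lam * grid M k1) * x1 + (v3 - lam * grid M k2) * x3) by ring;
     apply Rabs_comb2_le; auto
   | destruct (dominant_coord_near_grid M v3 v1 v2 HM ltac:(lra) ltac:(lra) ltac:(lra))
       as [sg [k1 [k2 [lam [Hs [Hk1 [Hk2 [Hl [E [A1 A2]]]]]]]]]];
     exists (cube_pt 2 sg (grid M k1) (grid M k2)); split; [apply In_cube_grid; auto |];
     exists lam; split; auto; intros [[x1 x2] x3] Hx; apply sphere_coord_bound in Hx as [X1 [X2 X3]];
     simpl; rewrite E;
     replace (v1 * x1 + v2 * x2 + lam * sg * x3 - lam * (grid M k1 * x1 + grid M k2 * x2 + sg * x3))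
       with ((v1 - lam * grid M k1) * x1 + (v2 - lam * grid M k2) * x2) by ring;
     apply Rabs_comb2_le; auto ].
Qed.

(** * Random choice of the centers *)

Lemma prodR_miss_lt_1 {A} (F : A -> R) h L :
  prodR (fun a => 1 - ind_abs (F a) h) L < 1 -> exists a, In a L /\ Rabs (F a) <= h.
Proof.
  induction L as [| a L IH]; simpl; intros Hl; [lra |].
  unfold ind_abs at 1, abs_leb at 1 in Hl; destruct Rle_dec as [Ha | Ha].
  - exists a; auto.
  - destruct IH as [b [Hb Hb']]; [lra | exists b; auto].
Qed.

Lemma prodR_hit_pow3 {A} (F : A -> R) H L :
  prodR (fun a => 1 + 2 * ind_abs (F a) H) L = 3 ^ length (filter (fun a => abs_leb (F a) H) L).
Proof. induction L as [| a L IH]; simpl; auto; rewrite IH; unfold ind_abs; destruct abs_leb; simpl; ring. Qed.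

Lemma sum_miss_le M h y : (0 < M)%nat -> 0 < h <= 1 -> on_cube y ->
  sumR (fun a => 1 - ind_abs (dot3 y (normalize a)) h) (cube_grid M)
    <= 6 * INR M * INR M * (1 - (h * INR M - 2) / (3 * INR M)).
Proof.
  intros HM Hh Hy; assert (HMp : 0 < INR M) by (apply lt_0_INR; lia).
  assert (Hnorm : sumR (fun a => ind_abs (dot3 y a) h) (cube_grid M)
                  <= sumR (fun a => ind_abs (dot3 y (normalize a)) h) (cube_grid M)).
  { apply sumR_le_in; intros a Ha; apply cube_grid_on_cube in Ha.
    pose proof (on_cube_dot_self a Ha); pose proof (on_cube_norm3 a Ha).
    rewrite dot3_normalize by lra; apply ind_abs_div_ge; lra. }
  pose proof (count_cube_slab_ge M h y HM Hh Hy).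
  rewrite (sumR_ext_in _ (fun a => 1 + -1 * ind_abs (dot3 y (normalize a)) h)) by (intros; ring).
  rewrite sumR_add, sumR_scale, sumR_const, length_cube_grid.
  replace (6 * INR M * INR M * (1 - (h * INR M - 2) / (3 * INR M)))
    with (6 * INR M * INR M - 2 * (INR M * (h * INR M - 2))) by (field; lra).
  lra.
Qed.

Lemma sum_hit_le M H y : (0 < M)%nat -> 0 <= 2 * H < 1/2 -> on_cube y ->
  sumR (fun a => 1 + 2 * ind_abs (dot3 y (normalize a)) H) (cube_grid M)
    <= 6 * INR M * INR M * (1 + 2 * ((8 * H * INR M + 1) / INR M)).
Proof.
  intros HM HH Hy; assert (HMp : 0 < INR M) by (apply lt_0_INR; lia).
  assert (Hnorm : sumR (fun a => ind_abs (dot3 y (normalize a)) H) (cube_grid M)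
                  <= sumR (fun a => ind_abs (dot3 y a) (2 * H)) (cube_grid M)).
  { apply sumR_le_in; intros a Ha; apply cube_grid_on_cube in Ha.
    pose proof (on_cube_dot_self a Ha); pose proof (on_cube_norm3 a Ha).
    rewrite dot3_normalize by lra; apply ind_abs_div_le; lra. }
  pose proof (count_cube_slab_le M (2 * H) y HM HH Hy).
  rewrite sumR_add, sumR_scale, sumR_const, length_cube_grid.
  replace (6 * INR M * INR M * (1 + 2 * ((8 * H * INR M + 1) / INR M)))
    with (6 * INR M * INR M + 2 * (6 * (INR M * (4 * (2 * H) * INR M + 1)))) by (field; lra).
  lra.
Qed.

(* For [M] points drawn uniformly from the cube grid, the hypothesis bounds, summed over
   the grid directions [y], the probability that no strip of half-width [h] contains [y]
   plus the expectation of [3^(#strips of half-width H containing y) / 3^t]. *)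
Lemma exists_good_grid_tuple M h H t : (0 < M)%nat -> 0 < h <= 1 -> 0 <= 2 * H < 1/2 ->
  6 * INR M * INR M * ((1 - (h * INR M - 2) / (3 * INR M)) ^ M
                       + (1 + 2 * ((8 * H * INR M + 1) / INR M)) ^ M / 3 ^ t) < 1 ->
  exists L, length L = M /\ (forall a, In a L -> on_cube a) /\
    forall y, In y (cube_grid M) ->
      (exists a, In a L /\ Rabs (dot3 y (normalize a)) <= h) /\
      (length (filter (fun a => abs_leb (dot3 y (normalize a)) H) L) < t)%nat.
Proof.
  intros HM Hh HH Hbound.
  assert (HMp : 0 < INR M) by (apply lt_0_INR; lia).
  assert (H3t : 0 < 3 ^ t) by (apply pow_lt; lra).
  set (m := 6 * INR M * INR M).
  set (q1 := 1 - (h * INR M - 2) / (3 * INR M)).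
  set (q2 := 1 + 2 * ((8 * H * INR M + 1) / INR M)).
  destruct (exists_tuple_lt_1 (cube_grid M) (cube_grid M)
    (fun y a => 1 - ind_abs (dot3 y (normalize a)) h) (fun y a => 1 + 2 * ind_abs (dot3 y (normalize a)) H)
    (3 ^ t) M) as [L [Hlen [HLG HL]]].
  - intros y a; pose proof (ind_abs_01 (dot3 y (normalize a)) h); lra.
  - intros y a; pose proof (ind_abs_01 (dot3 y (normalize a)) H); lra.
  - exact H3t.
  - rewrite length_cube_grid; fold m.
    apply Rle_lt_trans with (m * (m ^ M * (q1 ^ M + q2 ^ M / 3 ^ t))).
    + apply Rle_trans with (m ^ M * (q1 ^ M + q2 ^ M / 3 ^ t) * INR (length (cube_grid M)));
        [| rewrite length_cube_grid; fold m; apply Req_le; ring].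
      apply sumR_le_const; intros y Hy.
      apply cube_grid_on_cube in Hy.
      assert (S1 := sum_miss_le M h y HM Hh Hy); assert (S2 := sum_hit_le M H y HM HH Hy).
      assert (0 <= sumR (fun a => 1 - ind_abs (dot3 y (normalize a)) h) (cube_grid M))
        by (apply sumR_nonneg; intros; pose proof (ind_abs_01 (dot3 y (normalize a)) h); lra).
      assert (0 <= sumR (fun a => 1 + 2 * ind_abs (dot3 y (normalize a)) H) (cube_grid M))
        by (apply sumR_nonneg; intros; pose proof (ind_abs_01 (dot3 y (normalize a)) H); lra).
      fold m q1 in S1; fold m q2 in S2.
      assert (0 < / 3 ^ t) by (apply Rinv_0_lt_compat; lra).
      apply Rle_trans with ((m * q1) ^ M + (m * q2) ^ M / 3 ^ t).
      * unfold Rdiv; apply Rplus_le_compat; [| apply Rmult_le_compat_r; [lra |]]; apply pow_incr; lra.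
      * rewrite !Rpow_mult_distr; apply Req_le; unfold Rdiv; ring.
    + assert (0 < m ^ M) by (apply pow_lt; unfold m; nra).
      replace (m ^ M) with (m ^ M * 1) at 2 by ring.
      rewrite <- Rmult_assoc, (Rmult_comm m), Rmult_assoc; apply Rmult_lt_compat_l; auto.
  - exists L; split; [exact Hlen |]; split; [intros a Ha; apply cube_grid_on_cube with M; auto |].
    intros y Hy; specialize (HL y Hy).
    assert (P1 : 0 <= prodR (fun a => 1 - ind_abs (dot3 y (normalize a)) h) L)
      by (apply prodR_nonneg; intros a _; pose proof (ind_abs_01 (dot3 y (normalize a)) h); lra).
    assert (P2 : 0 <= prodR (fun a => 1 + 2 * ind_abs (dot3 y (normalize a)) H) L / 3 ^ t).
    { apply Rmult_le_pos; [| apply Rlt_le, Rinv_0_lt_compat; lra].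
      apply prodR_nonneg; intros a _; pose proof (ind_abs_01 (dot3 y (normalize a)) H); lra. }
    split; [apply prodR_miss_lt_1 with (F := fun a => dot3 y (normalize a)); lra |].
    rewrite (prodR_hit_pow3 (fun a => dot3 y (normalize a))) in HL, P2.
    destruct (Nat.lt_ge_cases (length (filter (fun a => abs_leb (dot3 y (normalize a)) H) L)) t) as [| Hge];
      auto.
    exfalso; pose proof (Rle_pow 3 _ _ ltac:(lra) Hge).
    assert (1 <= 3 ^ length (filter (fun a => abs_leb (dot3 y (normalize a)) H) L) / 3 ^ t).
    { apply Rmult_le_reg_r with (3 ^ t); auto; unfold Rdiv; rewrite Rmult_assoc, Rinv_l; lra. }
    lra.
Qed.

Lemma exp_pow_INR x n : exp x ^ n = exp (INR n * x).
Proof.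
  induction n as [| n IH]; [simpl; rewrite Rmult_0_l, exp_0; reflexivity |].
  rewrite <- tech_pow_Rmult, IH, <- exp_plus, S_INR; f_equal; ring.
Qed.

Lemma exp_le_mono x y : x <= y -> exp x <= exp y.
Proof. intros [H | ->]; [apply Rlt_le, exp_increasing; auto | lra]. Qed.

Lemma ln_le_mono x y : 0 < x -> x <= y -> ln x <= ln y.
Proof. intros Hx [H | ->]; [apply Rlt_le, ln_increasing; auto | lra]. Qed.

Lemma ln_le_sub_1 x : 0 < x -> ln x <= x - 1.
Proof. intros H; pose proof (exp_ineq1_le (ln x)); rewrite exp_ln in H0; lra. Qed.

Lemma exp_1_gt_2 : 2 < exp 1.
Proof. pose proof (exp_ineq1 1 ltac:(lra)); lra. Qed.

Lemma exp_neg_4_lt : exp (-4) < 1/12.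
Proof.
  assert (E : exp 4 = exp 1 ^ 4) by (rewrite exp_pow_INR; f_equal; simpl; ring).
  assert (16 <= exp 4).
  { rewrite E; pose proof exp_1_gt_2; assert (4 < exp 1 * exp 1) by nra; simpl; nra. }
  assert (exp (-4) * exp 4 = 1) by (rewrite <- exp_plus; replace (-4 + 4) with 0 by ring; apply exp_0).
  pose proof (exp_pos (-4)); nra.
Qed.

Lemma ln_large_bounds n : 1000 <= n -> 4 <= ln n /\ 80 * ln n + 16 < n.
Proof.
  intros Hn; split.
  - assert (exp 4 <= n).
    { replace (exp 4) with (exp 1 ^ 4) by (rewrite exp_pow_INR; f_equal; simpl; ring).
      pose proof exp_le_3; pose proof (exp_pos 1).
      assert (exp 1 ^ 4 <= 3 ^ 4) by (apply pow_incr; lra); simpl in *; lra. }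
    rewrite <- (ln_exp 4); apply ln_le_mono; auto; apply exp_pos.
  - assert (L : ln n = ln (n / 256) + INR 8 * ln 2).
    { rewrite <- ln_pow, <- ln_mult by (try apply pow_lt; try apply Rdiv_lt_0_compat; lra).
      f_equal; simpl; field. }
    assert (ln 2 < 1) by (rewrite <- (ln_exp 1); apply ln_increasing; [lra | apply exp_1_gt_2]).
    assert (ln (n / 256) <= n / 256 - 1) by (apply ln_le_sub_1, Rdiv_lt_0_compat; lra).
    simpl INR in L; lra.
Qed.

(* Both terms are at most [6 exp(-4)]: [n^2 (1 - 10 ln n / 3n)^n ~ n^(2 - 10/3)], and
   [n^2 (1 + O(ln n / n))^n / 3^t <= n^2 exp(320 ln n + 66) / n^400]. *)
Lemma union_bound_lt_1 n (N t : nat) : INR N = n -> 1000 <= n -> 400 * ln n < INR t ->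
  6 * (n * n) * ((1 - (10 * ln n - 4) / (3 * n)) ^ N + (1 + 2 * ((160 * ln n + 33) / n)) ^ N / 3 ^ t) < 1.
Proof.
  intros En Hn Ht; destruct (ln_large_bounds n Hn) as [HL1 HL2]; set (L := ln n) in *.
  assert (Hq1 : 0 <= 1 - (10 * L - 4) / (3 * n) <= exp (- ((10 * L - 4) / (3 * n)))).
  { split; [| apply exp_ineq1_le].
    assert ((10 * L - 4) / (3 * n) * (3 * n) = 10 * L - 4) by (field; lra).
    assert (0 <= (10 * L - 4) / (3 * n)) by (apply Rmult_le_pos; [lra | apply Rlt_le, Rinv_0_lt_compat; lra]).
    nra. }
  assert (Hq2 : 0 <= 1 + 2 * ((160 * L + 33) / n) <= exp (2 * ((160 * L + 33) / n))).
  { split; [| apply exp_ineq1_le].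
    assert (0 <= (160 * L + 33) / n) by (apply Rmult_le_pos; [lra | apply Rlt_le, Rinv_0_lt_compat; lra]).
    lra. }
  assert (P1 : (1 - (10 * L - 4) / (3 * n)) ^ N <= exp (- (10 * L - 4) / 3)).
  { eapply Rle_trans; [apply pow_incr, Hq1 |]; rewrite exp_pow_INR, En; apply Req_le; f_equal; field; lra. }
  assert (P2 : (1 + 2 * ((160 * L + 33) / n)) ^ N <= exp (320 * L + 66)).
  { eapply Rle_trans; [apply pow_incr, Hq2 |]; rewrite exp_pow_INR, En; apply Req_le; f_equal; field; lra. }
  assert (P3 : exp (400 * L) <= 3 ^ t).
  { apply Rle_trans with (exp 1 ^ t); [rewrite exp_pow_INR; apply exp_le_mono; lra |].
    apply pow_incr; pose proof exp_le_3; pose proof (exp_pos 1); lra. }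
  assert (P4 : n * n = exp (2 * L))
    by (replace (2 * L) with (L + L) by ring; rewrite exp_plus; unfold L; rewrite exp_ln; lra).
  assert (H3t : 0 < 3 ^ t) by (apply pow_lt; lra).
  assert (Q1 : n * n * (1 - (10 * L - 4) / (3 * n)) ^ N <= exp (-4)).
  { rewrite P4; apply Rle_trans with (exp (2 * L) * exp (- (10 * L - 4) / 3)).
    - apply Rmult_le_compat_l; [apply Rlt_le, exp_pos | auto].
    - rewrite <- exp_plus; apply exp_le_mono; lra. }
  assert (Q2 : n * n * ((1 + 2 * ((160 * L + 33) / n)) ^ N / 3 ^ t) <= exp (-4)).
  { rewrite P4; apply Rle_trans with (exp (2 * L) * (exp (320 * L + 66) / exp (400 * L))).
    - apply Rmult_le_compat_l; [apply Rlt_le, exp_pos |]; unfold Rdiv.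
      apply Rmult_le_compat; [apply pow_le; lra | apply Rlt_le, Rinv_0_lt_compat; auto | auto |].
      apply Rinv_le_contravar; [apply exp_pos | auto].
    - unfold Rdiv; rewrite <- exp_Ropp, <- !exp_plus; apply exp_le_mono; lra. }
  pose proof exp_neg_4_lt; lra.
Qed.

Lemma good_sphere_centers N t : 1000 <= INR N -> 400 * ln (INR N) < INR t ->
  let w := 10 * ln (INR N) / INR N in
  exists C, length C = N /\ (forall x, In x C -> on_sphere x) /\
    forall y, In y (cube_grid N) ->
      (exists x, In x C /\ Rabs (dot3 y x) <= w - 2 / INR N) /\
      (length (filter (fun x => abs_leb (dot3 y x) (2 * (w + 2 / INR N))) C) < t)%nat.
Proof.
  intros HN Ht w; set (n := INR N) in *.
  destruct (ln_large_bounds n HN) as [HL1 HL2].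
  assert (HNpos : (0 < N)%nat) by (apply INR_lt; simpl; unfold n in *; lra).
  assert (Eh : (w - 2 / n) * n = 10 * ln n - 2) by (unfold w; field; lra).
  assert (EH : 2 * (w + 2 / n) * n = 20 * ln n + 4) by (unfold w; field; lra).
  destruct (exists_good_grid_tuple N (w - 2 / n) (2 * (w + 2 / n)) t HNpos) as [L [Hlen [Hcube HL]]].
  - split; nra.
  - split; nra.
  - fold n; pose proof (union_bound_lt_1 n N t eq_refl HN Ht).
    replace ((w - 2 / n) * n - 2) with (10 * ln n - 4) by lra.
    replace (8 * (2 * (w + 2 / n)) * n + 1) with (160 * ln n + 33) by lra.
    replace (6 * n * n) with (6 * (n * n)) by ring; auto.
  - exists (map normalize L); split; [rewrite length_map; auto |]; split.
    + intros x Hx; apply in_map_iff in Hx as [a [<- Ha]].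
      apply normalize_on_sphere; pose proof (on_cube_dot_self a (Hcube a Ha)); lra.
    + intros y Hy; destruct (HL y Hy) as [[a [Ha Hya]] Hcount]; split.
      * exists (normalize a); split; [apply in_map; auto | auto].
      * rewrite filter_map_swap, length_map; auto.
Qed.

Lemma abs_le_of_approx p q lam e h : 0 <= lam <= 1 -> Rabs (p - lam * q) <= e -> Rabs q <= h ->
  Rabs p <= h + e.
Proof.
  intros Hl Hpq Hq; replace p with ((p - lam * q) + lam * q) by ring.
  eapply Rle_trans; [apply Rabs_triang |]; rewrite Rabs_mult, (Rabs_right lam) by lra.
  pose proof (Rabs_pos q); nra.
Qed.

Lemma abs_le_of_approx_inv p q lam e w : 1/2 <= lam -> Rabs (p - lam * q) <= e -> Rabs p <= w ->
  Rabs q <= 2 * (w + e).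
Proof.
  intros Hl Hpq Hp; assert (Rabs (lam * q) <= w + e).
  { replace (lam * q) with (p - (p - lam * q)) by ring.
    eapply Rle_trans; [apply Rabs_triang | rewrite Rabs_Ropp; lra]. }
  rewrite Rabs_mult, (Rabs_right lam) in H by lra; pose proof (Rabs_pos q); nra.
Qed.

Lemma filter_length_mono {A} (p q : A -> bool) l :
  (forall x, In x l -> p x = true -> q x = true) -> (length (filter p l) <= length (filter q l))%nat.
Proof.
  induction l as [| a l IH]; simpl; intros H; auto.
  destruct (p a) eqn:Ep.
  - rewrite (H a (or_introl eq_refl) Ep); simpl; apply le_n_S, IH; auto.
  - destruct (q a); simpl; [apply le_S |]; apply IH; auto.
Qed.

Lemma filter_nth_seq {A} (q : A -> bool) d L :
  length (filter (fun i => q (nth i L d)) (seq 0 (length L))) = length (filter q L).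
Proof.
  induction L as [| a L IH]; simpl; auto.
  rewrite <- seq_shift, filter_map_swap; simpl.
  destruct (q a); simpl; rewrite length_map, IH; reflexivity.
Qed.

Lemma cover_count_le_filter (C : list pt3) d w v (q : pt3 -> bool) :
  (forall x, In x C -> Rabs (dot3 v x) <= w -> q x = true) ->
  (cover_count (fun i => nth i C d) (length C) w v <= length (filter q C))%nat.
Proof.
  intros Hq; unfold cover_count; rewrite <- (filter_nth_seq q d C).
  apply filter_length_mono; intros i Hi; apply in_seq in Hi.
  destruct Rle_dec; [| discriminate]; intros _; apply Hq; auto; apply nth_In; lia.
Qed.

Lemma exists_nat_between r : 0 <= r -> exists t : nat, r < INR t <= r + 1.
Proof.
  intros Hr; destruct (archimed r) as [H1 H2].
  assert (Hz : (0 <= up r)%Z) by (apply le_IZR; lra).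
  exists (Z.to_nat (up r)); rewrite INR_IZR_INZ, Z2Nat.id by auto; lra.
Qed.

Theorem theorem1p4 :
  exists c : R, exists N0 : nat, forall N : nat, (N0 <= N)%nat ->
    let w := 10 * ln (INR N) / INR N in
    exists centers : nat -> pt3,
      (forall i, (i < N)%nat -> on_sphere (centers i)) /\
      (forall v, on_sphere v -> exists i, (i < N)%nat /\ in_strip (centers i) w v) /\
      (forall v, on_sphere v -> INR (cover_count centers N w v) <= c * ln (INR N)).
Proof.
  exists 400, 1000%nat; intros N HN w.
  assert (HNr : 1000 <= INR N) by (replace 1000 with (INR 1000) by (simpl; ring); apply le_INR; auto).
  assert (HNpos : (0 < N)%nat) by (apply INR_lt; simpl; lra).
  destruct (ln_large_bounds _ HNr) as [Hln _].
  destruct (exists_nat_between (400 * ln (INR N))) as [t [Ht1 Ht2]]; [lra |].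
  destruct (good_sphere_centers N t HNr Ht1) as [C [Hlen [HC Hgood]]]; fold w in Hgood.
  exists (fun i => nth i C (1, 0, 0)); split; [| split].
  - intros i Hi; apply HC, nth_In; lia.
  - intros v Hv; destruct (cube_grid_net N v HNpos Hv) as [y [Hy [lam [Hl Happrox]]]].
    destruct (Hgood y Hy) as [[x [Hx Hyx]] _]; destruct (In_nth C x (1, 0, 0) Hx) as [i [Hi <-]].
    exists i; split; [lia |]; split; [auto |].
    replace w with (w - 2 / INR N + 2 / INR N) by ring.
    apply (abs_le_of_approx _ (dot3 y (nth i C (1, 0, 0))) lam); [lra | apply Happrox; auto | auto].
  - intros v Hv; destruct (cube_grid_net N v HNpos Hv) as [y [Hy [lam [Hl Happrox]]]].
    destruct (Hgood y Hy) as [_ Hcount].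
    assert (Hle := cover_count_le_filter C (1, 0, 0) w v (fun x => abs_leb (dot3 y x) (2 * (w + 2 / INR N)))).
    rewrite Hlen in Hle; apply le_INR in Hcount; rewrite S_INR in Hcount.
    enough (INR (cover_count (fun i => nth i C (1, 0, 0)) N w v) <= INR t - 1) by lra.
    eapply Rle_trans; [apply le_INR, Hle | lra].
    intros x Hx Hvx; unfold abs_leb; destruct Rle_dec as [| Hn]; [reflexivity | exfalso; apply Hn].
    apply (abs_le_of_approx_inv (dot3 v x) _ lam); [lra | apply Happrox; auto | auto].
Qed.
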